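(* Let $S$ be a Hausdorff semitopological semigroup which is algebraically a primitive inverse semigroup, $S=\sum_{i\in\mathscr I}B_{\lambda_i}(G_i)$. Then: (i) for every $i\in\mathscr I$, $\alpha_i,\beta_i\in\lambda_i$ and every $(\alpha_i,g_i,\beta_i)\in(G_i)_{\alpha_i,\beta_i}$ there exists an open neighbourhood $U$ of $(\alpha_i,g_i,\beta_i)$ in $S$ with $U\subseteq (G_i)_{\alpha_i,\beta_i}$; hence every set $(G_i)_{\alpha_i,\beta_i}$ is open in $S$; (ii) every non-zero idempotent of $S$ is an isolated point of the subspace $E(S)$ of idempotents.
   Context: All spaces are Hausdorff; a semitopological semigroup is a Hausdorff space with separately continuous associative operation. For a group $G$ and a cardinal $\lambda\ge1$, the Brandt semigroup $B_\lambda(G)$ is $(\lambda\times G\times\lambda)\cup\{0\}$ with $(\alpha,a,\beta)(\gamma,b,\delta)=(\alpha,ab,\delta)$ if $\beta=\gamma$ and $0$ otherwise, $0$ being zero. The orthogonal sum of semigroups $T_\iota$ with zeros is $\{0\}\cup\bigcup_\iota(T_\iota\setminus\{0_\iota\})$ with products computed in $T_\iota$ when both factors lie in the same $T_\iota$ and the product is non-zero, and equal to $0$ otherwise. A primitive inverse semigroup is (up to isomorphism) exactly an orthogonal sum $\sum_{i\in\mathscr I}B_{\lambda_i}(G_i)$ of Brandt semigroups; we identify each $B_{\lambda_i}(G_i)$ with a subsemigroup of $S$ and write $(G_i)_{\alpha,\beta}=\{(\alpha,g,\beta):g\in G_i\}$ for $\alpha,\beta\in\lambda_i$. *)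

From Stdlib Require Import Classical ClassicalEpsilon.
Set Implicit Arguments.

Record topology (X : Type) := {
  is_open : (X -> Prop) -> Prop;
  open_full : is_open (fun _ => True);
  open_inter : forall U V, is_open U -> is_open V -> is_open (fun x => U x /\ V x);
  open_union : forall F : (X -> Prop) -> Prop,
      (forall U, F U -> is_open U) -> is_open (fun x => exists U, F U /\ U x)
}.

Definition hausdorff (X : Type) (T : topology X) : Prop :=
  forall x y : X, x <> y ->
    exists U V, is_open T U /\ is_open T V /\ U x /\ V y /\
                (forall z, U z -> V z -> False).

Definition continuous (X : Type) (T : topology X) (f : X -> X) : Prop :=
  forall U, is_open T U -> is_open T (fun x => U (f x)).

(** Semitopological semigroup: separately continuous multiplication
    (associativity of the concrete operation below holds automatically). *)
Definition semitopological (X : Type) (T : topology X) (mul : X -> X -> X) : Prop :=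
  hausdorff T /\ (forall a, continuous T (mul a)) /\
  (forall a, continuous T (fun x => mul x a)).

Record group_on (G : Type) := {
  gmul : G -> G -> G;
  gone : G;
  ginv : G -> G;
  gmulA : forall x y z, gmul x (gmul y z) = gmul (gmul x y) z;
  gmul1l : forall x, gmul gone x = x;
  gmul1r : forall x, gmul x gone = x;
  gmulVl : forall x, gmul (ginv x) x = gone;
  gmulVr : forall x, gmul x (ginv x) = gone
}.

(** Orthogonal sum of Brandt semigroups B_{lambda_i}(G_i), i in I.
    [None] is the zero; [Some (existT i (a,g,b))] is (a,g,b) in B_{lambda_i}(G_i). *)
Definition PIS (I : Type) (L G : I -> Type) : Type :=
  option {i : I & (L i * G i * L i)%type}.

Definition pis_mul (I : Type) (L G : I -> Type) (grp : forall i, group_on (G i))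
  (x y : PIS L G) : PIS L G :=
  match x, y with
  | Some (existT _ i (a, g, b)), Some (existT _ j (c, h, d)) =>
      match excluded_middle_informative (i = j) with
      | left e =>
          match e in _ = j' return L j' -> G j' -> L j' -> PIS L G with
          | eq_refl => fun c h d =>
              if excluded_middle_informative (b = c)
              then Some (existT _ i (a, gmul (grp i) g h, d))
              else None
          end c h d
      | right _ => None
      end
  | _, _ => None
  end.

Definition block (I : Type) (L G : I -> Type) (i : I) (al be : L i) : PIS L G -> Prop :=
  fun x => exists g : G i, x = Some (existT _ i (al, g, be)).

Definition idempotent (X : Type) (mul : X -> X -> X) (x : X) : Prop := mul x x = x.

(** Write e_alpha = (alpha,1,alpha).  Algebraically, the two-sided
    translation y |-> e_alpha * y * e_beta fixes every point of (G_i)_{alpha,beta}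
    and sends every point outside it to 0.  Topologically, this translation is
    continuous (multiplication is separately continuous), and by the Hausdorff
    property a point x of the block has an open neighbourhood U not containing 0.
    The preimage of U under the translation is then an open neighbourhood of x
    inside the block, which gives (i); (i) says that the block is a neighbourhood
    of each of its points, hence open.  For (ii), a non-zero idempotent is some
    e_alpha, and it is the only idempotent of the open block (G_i)_{alpha,alpha},
    because the only idempotent of a group is its unit. *)

From Stdlib Require Import ClassicalEpsilon FunctionalExtensionality
  PropExtensionality Eqdep.

Lemma group_idempotent_unit {G : Type} (grp : group_on G) (h : G) :
  gmul grp h h = h -> h = gone grp.
Proof.
  intro hh.
  (* h = (h^-1 h) h = h^-1 (h h) = h^-1 h = 1 *)
  transitivity (gmul grp (gmul grp (ginv grp h) h) h).
  - rewrite gmulVl, gmul1l; reflexivity.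
  - rewrite <- gmulA, hh, gmulVl; reflexivity.
Qed.

Section OrthogonalSum.
Context {I : Type} {L G : I -> Type} (grp : forall i, group_on (G i)).

Local Notation S := (PIS L G).
Local Notation mul := (pis_mul grp).
Local Notation elt i a g b :=
  (Some (existT (fun i => (L i * G i * L i)%type) i (a, g, b)) : S).

Definition unit_at (i : I) (a : L i) : S := elt i a (gone (grp i)) a.

Lemma pis_mul_same i a g b c h d :
  mul (elt i a g b) (elt i c h d) =
  if excluded_middle_informative (b = c) then elt i a (gmul (grp i) g h) d else None.
Proof.
  simpl; destruct (excluded_middle_informative (i = i)) as [e|n]; [|congruence].
  rewrite (UIP_refl _ _ e); reflexivity.
Qed.

Lemma pis_mul_zero_r (y : S) : mul y None = None.
Proof. destruct y as [[j [[c h] d]]|]; reflexivity. Qed.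

Lemma elt_inj i a g b c h d : elt i a g b = elt i c h d -> (a, g, b) = (c, h, d).
Proof.
  intro E; injection E as Ea Eg Eb.
  apply inj_pair2 in Ea, Eg, Eb; subst; reflexivity.
Qed.

Lemma unit_sandwich i a g b : mul (unit_at i a) (mul (elt i a g b) (unit_at i b)) = elt i a g b.
Proof.
  unfold unit_at; rewrite pis_mul_same.
  destruct (excluded_middle_informative (b = b)) as [_|n]; [|congruence].
  rewrite pis_mul_same.
  destruct (excluded_middle_informative (a = a)) as [_|n]; [|congruence].
  rewrite gmul1r, gmul1l; reflexivity.
Qed.

Lemma sandwich_nonzero_block i a b (y : S) :
  mul (unit_at i a) (mul y (unit_at i b)) <> None -> block i a b y.
Proof.
  destruct y as [[j [[c h] d]]|]; [|simpl; congruence].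
  intro nz; destruct (excluded_middle_informative (j = i)) as [<-|ne].
  - unfold unit_at in nz; rewrite pis_mul_same in nz.
    destruct (excluded_middle_informative (d = b)) as [<-|_];
      [|rewrite pis_mul_zero_r in nz; congruence].
    rewrite pis_mul_same in nz.
    destruct (excluded_middle_informative (a = c)) as [<-|_]; [|congruence].
    exists h; reflexivity.
  - exfalso; apply nz; simpl.
    destruct (excluded_middle_informative (j = i)) as [e|_]; [congruence|].
    first [reflexivity | apply pis_mul_zero_r].
Qed.

Lemma idempotent_diagonal {e : S} :
  idempotent mul e -> e <> None -> exists i a, block i a a e.
Proof.
  destruct e as [[i [[a g] b]]|]; [|congruence].
  unfold idempotent; rewrite pis_mul_same; intros ide _.
  destruct (excluded_middle_informative (b = a)) as [->|_]; [|discriminate].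
  exists i, a, g; reflexivity.
Qed.

Lemma diagonal_block_idempotent {i a} {x : S} :
  block i a a x -> idempotent mul x -> x = unit_at i a.
Proof.
  intros [h ->]; unfold idempotent; rewrite pis_mul_same.
  destruct (excluded_middle_informative (a = a)) as [_|n]; [|congruence].
  intro E; apply elt_inj in E; injection E as hh.
  unfold unit_at; rewrite (group_idempotent_unit _ _ hh); reflexivity.
Qed.

End OrthogonalSum.

Section Topology.
Context {X : Type} (T : topology X).

Lemma open_of_local (A : X -> Prop) :
  (forall x, A x -> exists U, is_open T U /\ U x /\ (forall y, U y -> A y)) ->
  is_open T A.
Proof.
  intro loc.
  replace A with (fun x => exists U, (is_open T U /\ forall y, U y -> A y) /\ U x).
  - apply open_union; intros U [oU _]; exact oU.
  - apply functional_extensionality; intro x; apply propositional_extensionality.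
    split.
    + intros [U [[_ sU] Ux]]; auto.
    + intro Ax; destruct (loc x Ax) as [U [oU [Ux sU]]]; exists U; auto.
Qed.

Lemma hausdorff_avoid {x z : X} :
  hausdorff T -> x <> z -> exists U, is_open T U /\ U x /\ ~ U z.
Proof.
  intros haus ne; destruct (haus x z ne) as [U [V [oU [_ [Ux [Vz dUV]]]]]].
  exists U; split; [exact oU|split; [exact Ux|intro Uz; exact (dUV z Uz Vz)]].
Qed.

Lemma open_sandwich_preimage {mul : X -> X -> X} {a b : X} {U : X -> Prop} :
  semitopological T mul -> is_open T U -> is_open T (fun y => U (mul a (mul y b))).
Proof.
  intros [_ [contl contr]] oU.
  exact (contr b (fun z => U (mul a z)) (contl a U oU)).
Qed.

End Topology.

Lemma block_neighbourhood {I : Type} {L G : I -> Type}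
  {grp : forall i, group_on (G i)} {T : topology (PIS L G)}
  (HS : semitopological T (pis_mul grp)) (i : I) (al be : L i) (g : G i) :
  exists U, is_open T U /\ U (Some (existT _ i (al, g, be))) /\
            (forall x, U x -> @block I L G i al be x).
Proof.
  destruct (hausdorff_avoid T (x := Some (existT _ i (al, g, be))) (z := None) (proj1 HS))
    as [U [oU [Ux notU0]]]; [discriminate|].
  exists (fun y => U (pis_mul grp (unit_at grp i al) (pis_mul grp y (unit_at grp i be)))).
  split; [|split].
  - exact (open_sandwich_preimage T HS oU).
  - rewrite unit_sandwich; exact Ux.
  - intros y Uy; apply (sandwich_nonzero_block grp); intro E; rewrite E in Uy; exact (notU0 Uy).
Qed.

Theorem corollary2p3 (I : Type) (L G : I -> Type)
  (L_nonempty : forall i, inhabited (L i))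
  (grp : forall i, group_on (G i))
  (T : topology (PIS L G))
  (HS : semitopological T (pis_mul grp)) :
  (forall (i : I) (al be : L i) (g : G i),
     exists U, is_open T U /\ U (Some (existT _ i (al, g, be))) /\
               (forall x, U x -> @block I L G i al be x))
  /\ (forall (i : I) (al be : L i), is_open T (@block I L G i al be))
  /\ (forall e : PIS L G, idempotent (pis_mul grp) e -> e <> None ->
        exists U, is_open T U /\ U e /\
          (forall x, U x -> idempotent (pis_mul grp) x -> x = e)).
Proof.
  assert (block_open : forall (i : I) (al be : L i), is_open T (@block I L G i al be)).
  { intros i al be; apply (open_of_local T); intros x [g ->].
    exact (block_neighbourhood HS i al be g). }
  split; [exact (block_neighbourhood HS)|split; [exact block_open|]].
  intros e ide nz.
  destruct (idempotent_diagonal grp ide nz) as [i [a e_block]].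
  exists (@block I L G i a a); split; [apply block_open|split; [exact e_block|]].
  intros x x_block idx.
  rewrite (diagonal_block_idempotent grp x_block idx).
  symmetry; exact (diagonal_block_idempotent grp e_block ide).
Qed.
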